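(* The WKD-IBE construction described in the context is history-independent: for every pattern $S$ and any two well-formed keys $k_1$ (for pattern $P_1$) and $k_2$ (for pattern $P_2$) in the same system (same $\mathsf{Params}$ and $\alpha$) such that $P_1$ matches $S$ and $P_2$ matches $S$, the distributions $\{\mathbf{KeyDer}(k_1,S)\}$ and $\{\mathbf{KeyDer}(k_2,S)\}$ over the internal randomness of $\mathbf{KeyDer}$ are identical. Here, if $k_1$ (resp. $k_2$) is the master key, $P_1$ (resp. $P_2$) is the pattern with all slots equal to $\bot$.
   Context: Patterns: for a prime $p$ and integer $\ell$, a pattern is $S\in(\mathbb{Z}_p^*\cup\{\bot\})^\ell$; $\mathrm{fixed}(S)=\{(i,S(i)):S(i)\neq\bot\}$, $\mathrm{free}(S)=\{i:S(i)=\bot\}$; $P$ matches $S$ if for all $i$, $P(i)=\bot$ or $P(i)=S(i)$. Construction. Let $\mathbb{G}_1,\mathbb{G}_2,\mathbb{G}_T$ be cyclic groups of prime order $p$ with a bilinear map $e:\mathbb{G}_1\times\mathbb{G}_2\to\mathbb{G}_T$. $\mathbf{Setup}(1^\ell)$: choose $g\in\mathbb{G}_2$ and $g_2,g_3,h_1,\dots,h_\ell,h_s\in\mathbb{G}_1$ uniformly, $\alpha\in\mathbb{Z}_p$ uniformly, set $g_1=g^\alpha$; $\mathsf{Params}=(g,g_1,g_2,g_3,h_1,\dots,h_\ell,h_s)$ and $\mathsf{MasterKey}=g_2^\alpha$. Here $s$ is a special index, distinct from $1,\dots,\ell$, never fixed in a pattern. For a pattern $S$ write $Q_S=g_3\prod_{(i,a_i)\in\mathrm{fixed}(S)}h_i^{a_i}$.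 Non-master keys are triples $(k_0,k_1,B)$ with $k_0\in\mathbb{G}_1$, $k_1\in\mathbb{G}_2$, $B$ a set of pairs $(j,b_j)$ with $b_j\in\mathbb{G}_1$. $\mathbf{KeyDer}$ from the master key to pattern $S$: sample $r\in\mathbb{Z}_p$ uniformly and output $(g_2^\alpha Q_S^r,\ g^r,\ \{(j,h_j^r)\}_{j\in\mathrm{free}(S)\cup\{s\}})$. $\mathbf{KeyDer}$ from a key $(k_0,k_1,B)$, $B=\{(i,b_i)\}$, to pattern $S$: sample $t\in\mathbb{Z}_p$ uniformly and output $\big(k_0\,Q_S^t\prod_{(i,a_i)\in\mathrm{fixed}(S),\,(i,b_i)\in B}b_i^{a_i},\ g^t k_1,\ \{(j,h_j^t b_j)\}_{j\in\mathrm{free}(S)\cup\{s\}}\big)$. A non-master key for pattern $P$ is well-formed if it equals $(g_2^\alpha Q_P^{r_0},\ g^{r_0},\ \{(j,h_j^{r_0})\}_{j\in\mathrm{free}(P)\cup\{s\}})$ for some $r_0\in\mathbb{Z}_p$; the master key $g_2^\alpha$ is also regarded as well-formed. *)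

From mathcomp Require Import all_boot all_fingroup.
Set Implicit Arguments.
Unset Strict Implicit.
Unset Printing Implicit Defensive.
Local Open Scope group_scope.

(* Patterns of length l over Z_p^* u {bot}: slot i is [None] (= bot) or
   [Some a] with a : 'I_p (an element of Z_p, required nonzero by
   [valid_pattern]). *)
Definition pattern (p l : nat) := 'I_l -> option 'I_p.

Definition valid_pattern (p l : nat) (S : pattern p l) : Prop :=
  forall i a, S i = Some a -> (0 < a)%N.

Definition matches (p l : nat) (P S : pattern p l) : Prop :=
  forall i, P i = None \/ P i = S i.

Definition all_bot (p l : nat) : pattern p l := fun _ => None.

(* Indices of the B-component: [Some i] is slot i, [None] is the special
   index s. [in_free_s S j] : j \in free(S) u {s}. *)
Definition in_free_s (p l : nat) (S : pattern p l) (j : option 'I_l) : bool :=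
  if j is Some i then S i == None else true.

Record params (G1 G2 : finGroupType) (l : nat) := Params {
  pg  : G2;
  pg1 : G2;
  pg2 : G1;
  pg3 : G1;
  ph  : 'I_l -> G1;
  phs : G1 }.

Definition hidx (G1 G2 : finGroupType) (l : nat) (pr : params G1 G2 l)
  (j : option 'I_l) : G1 := if j is Some i then ph pr i else phs pr.

Definition QS (G1 G2 : finGroupType) (p l : nat) (pr : params G1 G2 l)
  (S : pattern p l) : G1 :=
  pg3 pr * \prod_(i < l) (if S i is Some a then ph pr i ^+ a else 1).

(* Keys: the master key g2^alpha, or a non-master triple (k0, k1, B), where
   B is a partial map from indices (slots and s) to G1, i.e. a set of pairs
   (j, b_j) with at most one pair per index. *)
Inductive key (G1 G2 : finGroupType) (l : nat) :=
| Master of G1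
| NonMaster of G1 & G2 & {ffun option 'I_l -> option G1}.

Definition nm_key (G1 G2 : finGroupType) (l : nat) := (G1 * G2 * {ffun option 'I_l -> option G1})%type.

Definition KeyDer (G1 G2 : finGroupType) (p l : nat) (pr : params G1 G2 l)
  (k : key G1 G2 l) (S : pattern p l) (t : 'I_p) : nm_key G1 G2 l :=
  match k with
  | Master m =>
      (m * QS pr S ^+ t, pg pr ^+ t,
       [ffun j => if in_free_s S j then Some (hidx pr j ^+ t) else None])
  | NonMaster k0 k1 B =>
      (k0 * QS pr S ^+ t *
         \prod_(i < l) (match S i, B (Some i) with
                        | Some a, Some b => b ^+ a
                        | _, _ => 1 end),
       pg pr ^+ t * k1,
       (* b_j is present for every j in free(S) u {s} whenever the source key
          is well-formed for a pattern matched by S; the default 1 is never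
          used in that case *)
       [ffun j => if in_free_s S j then Some (hidx pr j ^+ t * odflt 1 (B j))
                  else None])
  end.

Definition well_formed (G1 G2 : finGroupType) (p l : nat) (pr : params G1 G2 l)
  (alpha : 'I_p) (P : pattern p l) (k : key G1 G2 l) : Prop :=
  (k = @Master G1 G2 l (pg2 pr ^+ alpha) /\ P = @all_bot p l) \/
  exists r0 : 'I_p,
    k = NonMaster (pg2 pr ^+ alpha * QS pr P ^+ r0) (pg pr ^+ r0)
          [ffun j => if in_free_s P j then Some (hidx pr j ^+ r0) else None].

(* Probability mass of output [o] of KeyDer(k,S) under uniform t in Z_p is
   (number of t giving o) / p; identical distributions <=> identical counts. *)
Definition keyder_count (G1 G2 : finGroupType) (p l : nat) (pr : params G1 G2 l)
  (k : key G1 G2 l) (S : pattern p l) (o : nm_key G1 G2 l) : nat :=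
  #|[pred t : 'I_p | KeyDer pr k S t == o]|.

(* A key for P that is well-formed with randomness r, derived to a pattern S
   matched by P with fresh randomness t, is exactly the well-formed key for S
   with randomness t + r: the components h_j^r stored for the free slots of P
   supply the factors h_i^(a_i r) that Q_P^r lacks in Q_S^r.  As t |-> t + r
   permutes Z_p, derivation from any well-formed key (the master key being the
   case without shift) yields the uniform distribution over the well-formed
   keys for S. *)

From mathcomp Require Import all_boot all_fingroup all_solvable.
Set Implicit Arguments.
Unset Strict Implicit.
Unset Printing Implicit Defensive.
Local Open Scope group_scope.

Section CommutingProducts.
Variable gT : finGroupType.
Hypothesis mulgC : forall x y : gT, commute x y.

Lemma prodgM n (F G : 'I_n -> gT) :
  \prod_(i < n) (F i * G i) = (\prod_(i < n) F i) * \prod_(i < n) G i.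
Proof.
elim: n F G => [|n IHn] F G; first by rewrite !big_ord0 mulg1.
rewrite !big_ord_recr /= IHn -!mulgA; congr (_ * _).
by rewrite !mulgA; congr (_ * _); apply: mulgC.
Qed.

Lemma prodgXn n m (F : 'I_n -> gT) :
  (\prod_(i < n) F i) ^+ m = \prod_(i < n) F i ^+ m.
Proof.
by apply: (big_morph (fun x => x ^+ m)) => [x y|]; [exact: expgMn | exact: expg1n].
Qed.

End CommutingProducts.

Lemma commute_prime_card (gT : finGroupType) :
  prime #|[set: gT]| -> forall x y : gT, commute x y.
Proof.
move/prime_cyclic/cyclic_abelian/centsP => cTT x y.
by apply: cTT; rewrite inE.
Qed.

Lemma card_ord_shift p r (P : pred nat) : (0 < p)%N ->
  #|[pred t : 'I_p | P ((t + r) %% p)]| = #|[pred t : 'I_p | P t]|.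
Proof.
move=> p_gt0; pose shift (t : 'I_p) : 'I_p := Ordinal (ltn_pmod (t + r) p_gt0).
have shift_inj : injective shift.
  move=> t u /(congr1 val) /= /eqP.
  by rewrite eqn_modDr !modn_small // => /eqP /val_inj.
have -> : #|[pred t : 'I_p | P t]| = #|[set t : 'I_p | P t]|.
  by apply: eq_card => t; rewrite inE.
by rewrite -(card_preimset _ shift_inj); apply: eq_card => t; rewrite !inE.
Qed.

Section KeyDerivation.
Variables (G1 G2 : finGroupType) (p l : nat) (pr : params G1 G2 l) (alpha : 'I_p).

Definition wf_key_B (P : pattern p l) (r : nat) : {ffun option 'I_l -> option G1} :=
  [ffun j => if in_free_s P j then Some (hidx pr j ^+ r) else None].

Definition wf_key (P : pattern p l) (r : nat) : key G1 G2 l :=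
  NonMaster (pg2 pr ^+ alpha * QS pr P ^+ r) (pg pr ^+ r) (wf_key_B P r).

Definition wf_nm_key (P : pattern p l) (r : nat) : nm_key G1 G2 l :=
  (pg2 pr ^+ alpha * QS pr P ^+ r, pg pr ^+ r, wf_key_B P r).

Lemma wf_nm_key_modn S u :
  (forall x : G1, x ^+ p = 1) -> (forall x : G2, x ^+ p = 1) ->
  wf_nm_key S (u %% p) = wf_nm_key S u.
Proof.
move=> G1p G2p; rewrite /wf_nm_key !expg_mod //; congr (_, _, _).
by apply/ffunP => j; rewrite !ffunE expg_mod.
Qed.

Lemma wf_key_B_extend P S r t : matches P S ->
  [ffun j => if in_free_s S j then Some (hidx pr j ^+ t * odflt 1 (wf_key_B P r j))
             else None] = wf_key_B S (t + r).
Proof.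
move=> PS; apply/ffunP => -[i|]; rewrite !ffunE /= -?expgD //.
case: eqP => [Si_bot | //]; suff -> : P i == None by rewrite /= -expgD.
by case: (PS i) => ->; rewrite ?Si_bot.
Qed.

Hypothesis mulG1C : forall x y : G1, commute x y.

Lemma QS_expg_extend P S r : matches P S ->
  QS pr P ^+ r * \prod_(i < l) match S i, wf_key_B P r (Some i) with
                               | Some a, Some b => b ^+ a
                               | _, _ => 1 end = QS pr S ^+ r.
Proof.
move=> PS; rewrite /QS !expgMn // -mulgA; congr (_ * _).
rewrite !prodgXn // -prodgM //; apply: eq_bigr => i _; rewrite ffunE /=.
case: (PS i) => ->; case: (S i) => [a|] /=; rewrite ?expg1n ?mulg1 //.
by rewrite mul1g -!expgM mulnC.
Qed.

Lemma KeyDer_wf_key P S r t : matches P S ->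
  KeyDer pr (wf_key P r) S t = wf_nm_key S (t + r).
Proof.
move=> PS; rewrite /KeyDer /wf_key /wf_nm_key wf_key_B_extend // !expgD.
congr (_, _, _); rewrite -(QS_expg_extend r PS) -!mulgA; congr (_ * _).
by rewrite !mulgA (mulG1C (QS pr P ^+ r)).
Qed.

Lemma keyder_count_well_formed P S k o : (0 < p)%N ->
  (forall x : G1, x ^+ p = 1) -> (forall x : G2, x ^+ p = 1) ->
  well_formed pr alpha P k -> matches P S ->
  keyder_count pr k S o = #|[pred t : 'I_p | wf_nm_key S t == o]|.
Proof.
move=> p_gt0 G1p G2p [[-> _] | [r ->]] PS; first exact: eq_card.
rewrite -(card_ord_shift r (fun u => wf_nm_key S u == o) p_gt0).
by apply: eq_card => t; rewrite !inE wf_nm_key_modn // (KeyDer_wf_key r t PS).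
Qed.

End KeyDerivation.

Theorem theorem3
  (p l : nat) (G1 G2 GT : finGroupType)
  (e : G1 -> G2 -> GT)
  (pr : params G1 G2 l) (alpha : 'I_p)
  (S P1 P2 : pattern p l) (k1 k2 : key G1 G2 l) :
  prime p ->
  #|[set: G1]| = p -> #|[set: G2]| = p -> #|[set: GT]| = p ->
  (forall (a : G1) (b : G2) (x y : nat), e (a ^+ x) (b ^+ y) = e a b ^+ (x * y)) ->
  pg1 pr = pg pr ^+ alpha ->
  valid_pattern S -> valid_pattern P1 -> valid_pattern P2 ->
  well_formed pr alpha P1 k1 -> well_formed pr alpha P2 k2 ->
  matches P1 S -> matches P2 S ->
  forall o : nm_key G1 G2 l,
    keyder_count pr k1 S o = keyder_count pr k2 S o.
Proof.
move=> p_pr cardG1 cardG2 _ _ _ _ _ _ wf1 wf2 P1S P2S o.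
have mulG1C : forall x y : G1, commute x y.
  by apply: commute_prime_card; rewrite cardG1.
have G1p (x : G1) : x ^+ p = 1 by rewrite -cardG1 (expg_cardG (in_setT x)).
have G2p (x : G2) : x ^+ p = 1 by rewrite -cardG2 (expg_cardG (in_setT x)).
rewrite (keyder_count_well_formed mulG1C _ (prime_gt0 p_pr) G1p G2p wf1 P1S).
by rewrite (keyder_count_well_formed mulG1C _ (prime_gt0 p_pr) G1p G2p wf2 P2S).
Qed.
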